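(* Let $C$ be a closed cone with nonempty interior in a real Banach space and let $f:\operatorname{int} C \to \operatorname{int} C$ be subhomogeneous and type K order-preserving. For $\epsilon > 0$ let $f_\epsilon := f - \epsilon\, \mathrm{id}$. Then for any $x, y \in \operatorname{int} C$ there exists $\epsilon > 0$ small enough that $f_\epsilon(x), f_\epsilon(y) \in \operatorname{int} C$ and $$d_T(f_\epsilon(x), f_\epsilon(y)) \le d_T(x,y).$$
   Context: A closed cone is a closed convex set $C \subset X$ with $\lambda C \subset C$ for all $\lambda \ge 0$ and $C \cap (-C) = \{0\}$; $x \le y$ means $y - x \in C$. A map $f$ is subhomogeneous if $f(tx) \le t f(x)$ for all $t \ge 1$; it is type K order-preserving if for any $x \le y$ in its domain there exists $\epsilon > 0$ with $f(y) - f(x) \ge \epsilon (y - x)$. For $x, y \in C$, $M(x/y) := \inf\{\beta > 0 : x \le \beta y\}$. For $x,y\in\operatorname{int} C$, Thompson's metric is $d_T(x,y) := \max\{\log M(x/y), \log M(y/x)\}$. *)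

From HB Require Import structures.
From mathcomp Require Import all_boot all_order all_algebra.
From mathcomp Require Import all_classical all_reals all_analysis.
Set Implicit Arguments. Unset Strict Implicit. Unset Printing Implicit Defensive.
Import Order.TTheory GRing.Theory Num.Theory.
Import numFieldNormedType.Exports.
Local Open Scope classical_set_scope.
Local Open Scope ring_scope.

Section ConeDefs.
Variables (R : realType) (V : completeNormedModType R).

Definition closed_cone (C : set V) : Prop :=
  [/\ closed C,
      (forall x y (t : R), C x -> C y -> 0 <= t -> t <= 1 -> C (t *: x + (1 - t) *: y)),
      (forall x (l : R), C x -> 0 <= l -> C (l *: x)) &
      (forall x, C x -> C (- x) -> x = 0)].

Definition cone_le (C : set V) (x y : V) : Prop := C (y - x).

Definition Mxy (C : set V) (x y : V) : R :=
  inf [set beta : R | 0 < beta /\ cone_le C x (beta *: y)].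

Definition thompson (C : set V) (x y : V) : R :=
  Num.max (ln (Mxy C x y)) (ln (Mxy C y x)).

Definition subhomogeneous (C D : set V) (f : V -> V) : Prop :=
  forall x (t : R), D x -> D (t *: x) -> 1 <= t -> cone_le C (f (t *: x)) (t *: f x).

Definition typeK_order_preserving (C D : set V) (f : V -> V) : Prop :=
  forall x y, D x -> D y -> cone_le C x y ->
    exists eps : R, 0 < eps /\ cone_le C (eps *: (y - x)) (f y - f x).

End ConeDefs.

(* Put l := max (M(x/y), M(y/x)), so that x <= l y, y <= l x and d_T(x, y) = log l.
   Type K order preservation and subhomogeneity give, for some e > 0,
   f x + e (l y - x) <= f (l y) <= l f y; for 0 < eps <= e this rearranges to
   f_eps x <= l f_eps y, and symmetrically, so d_T(f_eps x, f_eps y) <= log l.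
   Openness of int C keeps f_eps x and f_eps y interior for small eps.  Finally
   l >= 1, since l < 1 would force -x in C, hence x = 0 and V = {0}. *)

From mathcomp Require Import all_boot all_order all_algebra.
From mathcomp Require Import all_classical all_reals all_analysis.
Set Implicit Arguments. Unset Strict Implicit. Unset Printing Implicit Defensive.
Import Order.TTheory GRing.Theory Num.Theory.
Import numFieldNormedType.Exports.
Local Open Scope classical_set_scope.
Local Open Scope ring_scope.

Lemma closure_inf (R : realType) (A : set R) :
  A !=set0 -> has_lbound A -> closure A (inf A).
Proof.
move=> A0 lA B /nbhs_ballP[e e0 infB].
have [a Aa aAe] := inf_adherent e0 (conj A0 lA).
exists a; split => //; apply: infB; rewrite -ball_normE /=.
have infa : inf A <= a by apply: ge_inf.
by rewrite distrC ger0_norm ?subr_ge0 // ltrBlDr addrC.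
Qed.

Section ClosedCone.
Variables (R : realType) (V : completeNormedModType R) (C : set V).

Lemma interior_subr_scaler (z x : V) : interior C z ->
  \forall eps \near (0 : R)^'+, interior C (z - eps *: x).
Proof.
move=> Cz; have cvg_z : (fun eps : R => z - eps *: x) @ 0 --> z.
  rewrite -[X in _ --> X]subr0 -[X in _ - X](scale0r x).
  by apply: cvgB; [exact: cvg_cst | exact: scalel_continuous].
have : \forall eps \near (0 : R), interior C (z - eps *: x).
  by apply: cvg_z; apply: open_nbhs_nbhs; split => //; exact: open_interior.
exact: (cvg_within (fun eps : R => 0 < eps)).
Qed.

Hypothesis coneC : closed_cone C.

Lemma cone_scaler (l : R) (x : V) : 0 <= l -> C x -> C (l *: x).
Proof. by case: coneC => _ _ scaleC _ l0 Cx; exact: scaleC. Qed.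

Lemma cone_add (x y : V) : C x -> C y -> C (x + y).
Proof.
case: coneC => _ convC _ _ Cx Cy.
have half_ge0 : (0 : R) <= 2^-1 by rewrite invr_ge0.
have half_le1 : (2^-1 : R) <= 1 by rewrite invf_le1 // ler1n.
have := cone_scaler (ler0n _ 2) (convC x y 2^-1 Cx Cy half_ge0 half_le1).
have -> : (1 - 2^-1 : R) = 2^-1 by rewrite {1}(splitr 1) mul1r addrK.
by rewrite scalerDr !scalerA divff ?pnatr_eq0 // !scale1r.
Qed.

Lemma cone_le_trans (x y z : V) : cone_le C x y -> cone_le C y z -> cone_le C x z.
Proof. by rewrite /cone_le => Cyx Czy; rewrite -(subrK y z) -addrA; exact: cone_add. Qed.

Lemma interior_scaler (l : R) (x : V) : 0 < l -> interior C x -> interior C (l *: x).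
Proof.
move=> l0 Cx; have l_neq0 : l != 0 by rewrite gt_eqF.
have : (fun w : V => l^-1 *: w) @ (l *: x) --> x.
  by rewrite -[X in _ --> X](scalerK l_neq0); exact: scaler_continuous.
move=> /(_ C Cx) nbhs_preimage.
apply: (filterS _ (nbhs_preimage : nbhs (l *: x) _)) => w /= Cw.
by rewrite -(scalerKV l_neq0 w); exact: cone_scaler (ltW l0) Cw.
Qed.

Lemma interior0_trivial : interior C 0 -> forall v : V, v = 0.
Proof.
move=> C0 v; case: coneC => _ _ _ pointedC.
near (0 : R)^'+ => t.
have Ctv : C (- (t *: v)).
  by rewrite -sub0r; apply: interior_subset; near: t; exact: interior_subr_scaler.
have Ctv' : C (t *: v).
  rewrite -[t *: v]opprK -scalerN -sub0r; apply: interior_subset.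
  near: t; exact: interior_subr_scaler.
have /eqP := pointedC _ Ctv' Ctv; rewrite scaler_eq0 => /orP[/eqP t0|/eqP //].
suff : 0 < t by rewrite t0 ltxx.
near: t; exact: nbhs_right_gt.
Unshelve. all: end_near.
Qed.

Lemma interior_order_unit (a b : V) : interior C b ->
  exists2 beta : R, 0 < beta & C (beta *: b - a).
Proof.
move=> Cb; near (0 : R)^'+ => t.
have t0 : 0 < t by near: t; exact: nbhs_right_gt.
exists t^-1; first by rewrite invr_gt0.
rewrite -[a](scalerK (lt0r_neq0 t0)) -scalerBr.
apply: cone_scaler; first by rewrite invr_ge0 ltW.
by apply: interior_subset; near: t; exact: interior_subr_scaler.
Unshelve. all: end_near.
Qed.

Lemma Mxy_le (a b : V) (beta : R) : 0 < beta -> C (beta *: b - a) -> Mxy C a b <= beta.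
Proof. by move=> beta0 Cb; apply: ge_inf => //; exists 0 => ? [/ltW]. Qed.

Lemma Mxy_ge0 (a b : V) : interior C b -> 0 <= Mxy C a b.
Proof.
move=> /(interior_order_unit a) [beta beta0 Cb].
by apply: lb_le_inf; [exists beta | move=> ? [/ltW]].
Qed.

Lemma Mxy_attained (a b : V) : interior C b -> C (Mxy C a b *: b - a).
Proof.
move=> Cb; have [beta beta0 Cbeta] := interior_order_unit a Cb.
case: coneC => closedC _ _ _.
have closed_dom : closed [set t : R | C (t *: b - a)].
  apply: preimage_closed => // t _; apply: cvgB; last exact: cvg_cst.
  exact: scalel_continuous.
apply: closed_dom; apply: (closureS _ (closure_inf _ _)).
- by move=> t [].
- by exists beta.
- by exists 0 => ? [/ltW].
Qed.

Lemma Mxy_cone_le (a b : V) (l : R) : interior C b -> Mxy C a b <= l -> C (l *: b - a).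
Proof.
move=> Cb Ml; rewrite -[l](subrK (Mxy C a b)) scalerDl -addrA.
apply: cone_add (Mxy_attained a Cb); apply: cone_scaler (interior_subset Cb).
by rewrite subr_ge0.
Qed.

Lemma ln_Mxy_le (a b : V) (l : R) : 1 <= l -> C (l *: b - a) -> ln (Mxy C a b) <= ln l.
Proof.
move=> l1 Cl; have l0 : 0 < l by exact: lt_le_trans ltr01 l1.
have [M0|M0] := leP (Mxy C a b) 0; first by rewrite ln0 // ln_ge0.
by rewrite ler_ln ?posrE // Mxy_le.
Qed.

Lemma thompson_le (a b : V) (l : R) :
  1 <= l -> C (l *: b - a) -> C (l *: a - b) -> thompson C a b <= ln l.
Proof. by move=> l1 Cab Cba; rewrite /thompson ge_max !ln_Mxy_le. Qed.

Lemma max_Mxy_ge1 (x y : V) : interior C x -> interior C y -> x != 0 ->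
  1 <= Num.max (Mxy C x y) (Mxy C y x).
Proof.
move=> Cx Cy; apply: contraNle => l_lt1; set l := Num.max _ _ in l_lt1.
have l0 : 0 <= l by rewrite le_max Mxy_ge0.
have Cyx : C (l *: y - x) by apply: Mxy_cone_le; rewrite // le_max lexx.
have Cxy : C (l *: x - y) by apply: Mxy_cone_le; rewrite // le_max lexx orbT.
have one_sub_l2_gt0 : 0 < 1 - l ^+ 2 by rewrite subr_gt0 expr_lt1.
have Cl2x : C ((l ^+ 2 - 1) *: x).
  have -> : (l ^+ 2 - 1) *: x = l *: (l *: x - y) + (l *: y - x).
    by rewrite scalerBr scalerA addrA subrK -expr2 scalerBl scale1r.
  exact: cone_add (cone_scaler l0 Cxy) Cyx.
have Cx_neg : C (- x).
  rewrite -scaleN1r -(mulVf (lt0r_neq0 one_sub_l2_gt0)) -mulrN opprB -scalerA.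
  by apply: cone_scaler Cl2x; rewrite invr_ge0 ltW.
by case: coneC => _ _ _ pointedC; rewrite (pointedC _ (interior_subset Cx) Cx_neg).
Qed.

End ClosedCone.

Lemma perturbed_cone_le (R : realType) (V : completeNormedModType R) (C : set V)
    (f : V -> V) (x y : V) (l : R) :
  closed_cone C ->
  subhomogeneous C (interior C) f -> typeK_order_preserving C (interior C) f ->
  interior C x -> interior C y -> 1 <= l -> C (l *: y - x) ->
  \forall eps \near (0 : R)^'+, C (l *: (f y - eps *: y) - (f x - eps *: x)).
Proof.
move=> coneC subf typeKf Cx Cy l1 Cyx.
have Cly : interior C (l *: y) by apply: interior_scaler; rewrite ?(lt_le_trans ltr01).
have [e [e0 Ce]] := typeKf x (l *: y) Cx Cly Cyx.
have Cfly := subf y l Cy Cly l1.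
near=> eps.
have Ce_le : cone_le C (f x + e *: (l *: y - x)) (f (l *: y)).
  by rewrite /cone_le opprD addrA.
have Ceps_e : cone_le C (f x + eps *: (l *: y - x)) (f x + e *: (l *: y - x)).
  rewrite /cone_le opprD addrACA subrr add0r -scalerBl.
  apply: (cone_scaler coneC) Cyx; rewrite subr_ge0.
  near: eps; exact: nbhs_right_le e0.
have -> : l *: (f y - eps *: y) - (f x - eps *: x) = l *: f y - (f x + eps *: (l *: y - x)).
  by rewrite !scalerBr !scalerA mulrC -addrA -opprD addrCA.
exact: (cone_le_trans coneC Ceps_e (cone_le_trans coneC Ce_le Cfly)).
Unshelve. all: end_near.
Qed.

Theorem mainTheorem2 (R : realType) (V : completeNormedModType R)
  (C : set V) (f : V -> V) :
  closed_cone C ->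
  interior C !=set0 ->
  (forall x, interior C x -> interior C (f x)) ->
  subhomogeneous C (interior C) f ->
  typeK_order_preserving C (interior C) f ->
  forall x y, interior C x -> interior C y ->
    exists eps : R, 0 < eps /\
      [/\ interior C (f x - eps *: x),
          interior C (f y - eps *: y) &
          thompson C (f x - eps *: x) (f y - eps *: y) <= thompson C x y].
Proof.
move=> coneC _ f_int subf typeKf x y Cx Cy.
have [x0|x_neq0] := eqVneq x 0.
  have V0 : forall v : V, v = 0 by apply: interior0_trivial coneC _; rewrite -x0.
  by exists 1; rewrite !(V0 (f _ - _)) (V0 y) -x0.
set l := Num.max (Mxy C x y) (Mxy C y x).
have l1 : 1 <= l := max_Mxy_ge1 coneC Cx Cy x_neq0.
have Cyx : C (l *: y - x) by apply: Mxy_cone_le; rewrite // le_max lexx.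
have Cxy : C (l *: x - y) by apply: Mxy_cone_le; rewrite // le_max lexx orbT.
near (0 : R)^'+ => eps.
exists eps; split; first by near: eps; exact: nbhs_right_gt.
split.
- by near: eps; exact: (interior_subr_scaler _ (f_int _ Cx)).
- by near: eps; exact: (interior_subr_scaler _ (f_int _ Cy)).
apply: (@le_trans _ _ (ln l)).
  apply: thompson_le => //; near: eps.
    exact: perturbed_cone_le coneC subf typeKf Cx Cy l1 Cyx.
  exact: perturbed_cone_le coneC subf typeKf Cy Cx l1 Cxy.
rewrite /thompson /l; case: (leP (Mxy C x y) (Mxy C y x)) => _.
  by rewrite le_max lexx orbT.
by rewrite le_max lexx.
Unshelve. all: end_near.
Qed.
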